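(* Let $n\ge4$. Let $U_n$ be the array obtained from $M_n$ by decreasing its $(2,2,2)$-entry by $1$ (all other entries unchanged). Then $U_n\in\mathcal C_n$, $U_n$ covers the minimum element $M_n$ in $(\mathcal C_n,\preceq)$ (so $U_n$ is join-irreducible), $\Xi^{-1}(U_n)_{2,2,2}=-1$, and hence $U_n\ne\Xi(H(L))$ for every Latin square $L\in\mathcal L_n$. Consequently $(\mathcal C_n,\preceq)$ is not the Dedekind–MacNeille completion of its subposet $\{\Xi(H(L)):L\in\mathcal L_n\}$.
   Context: Let $[n]=\{1,\dots,n\}$, $[0,n]=\{0,\dots,n\}$. A corner-sum hypermatrix of order $n$ is an integer array $C=(C_{i,j,k})_{i,j,k\in[0,n]}$ such that for all $i,j\in[0,n]$: $C_{i,j,0}=C_{i,0,j}=C_{0,i,j}=0$, $C_{i,j,n}=C_{i,n,j}=C_{n,i,j}=ij$, and for all $k\in[n]$ each of $C_{i,j,k}-C_{i,j,k-1}$, $C_{i,k,j}-C_{i,k-1,j}$, $C_{k,i,j}-C_{k-1,i,j}$ is an integer in $\{\max(0,i+j-n),\dots,\min(i,j)\}$. $\mathcal C_n$ is the set of these, ordered by $C\preceq D$ iff $C\ge D$ entrywise; its minimum is $M_n$ with $(M_n)_{i,j,k}=\min(k\min(i,j),\,ij-(n-k)\max(0,i+j-n))$. A Latin square of order $n$ is an $n\times n$ array over $[n]$ with each symbol once in each row and column; $\mathcal L_n$ is the set of them; $H(L)_{i,j,k}=1$ if $L_{i,j}=k$, else $0$. $\Xi(A)_{i,j,k}=\sum_{a\le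 i,b\le j,c\le k}A_{a,b,c}$ for $i,j,k\in[0,n]$, and $\Xi^{-1}(C)_{i,j,k}=C_{i,j,k}-C_{i-1,j,k}-C_{i,j-1,k}-C_{i,j,k-1}+C_{i-1,j-1,k}+C_{i-1,j,k-1}+C_{i,j-1,k-1}-C_{i-1,j-1,k-1}$ for $i,j,k\in[n]$. *)

From mathcomp Require Import all_boot all_order all_algebra.
Set Implicit Arguments. Unset Strict Implicit. Unset Printing Implicit Defensive.
Import Order.TTheory GRing.Theory Num.Theory.
Local Open Scope ring_scope.

(* Integer arrays indexed by [0,n]^3 (ordinals 'I_n.+1 represent 0..n). *)
Definition arr (n : nat) := {ffun 'I_n.+1 * 'I_n.+1 * 'I_n.+1 -> int}.

(* Entry access with natural-number indices (0 outside [0,n]^3; never used there). *)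
Definition ent (n : nat) (C : arr n) (i j k : nat) : int :=
  if [&& (i <= n)%N, (j <= n)%N & (k <= n)%N]
  then C (inord i, inord j, inord k) else 0.

Definition mk_arr (n : nat) (f : nat -> nat -> nat -> int) : arr n :=
  [ffun t => f (nat_of_ord t.1.1) (nat_of_ord t.1.2) (nat_of_ord t.2)].

(* x lies in {max(0,i+j-n), ..., min(i,j)} ; max(0,i+j-n) = truncated (i+j-n)%N *)
Definition in_bounds (n i j : nat) (x : int) : Prop :=
  ((i + j - n)%N%:Z <= x) /\ (x <= (minn i j)%:Z).

Definition is_csh (n : nat) (C : arr n) : Prop :=
  forall i j : nat, (i <= n)%N -> (j <= n)%N ->
    [/\ [/\ ent C i j 0 = 0, ent C i 0 j = 0 & ent C 0 i j = 0],
        [/\ ent C i j n = (i * j)%N%:Z, ent C i n j = (i * j)%N%:Z &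
             ent C n i j = (i * j)%N%:Z] &
        forall k : nat, (0 < k)%N -> (k <= n)%N ->
          [/\ in_bounds n i j (ent C i j k - ent C i j k.-1),
              in_bounds n i j (ent C i k j - ent C i k.-1 j) &
              in_bounds n i j (ent C k i j - ent C k.-1 i j)]].

Definition preceq (n : nat) (C D : arr n) : Prop := forall t, D t <= C t.

Definition Mn (n : nat) : arr n :=
  mk_arr n (fun i j k =>
    Order.min ((k * minn i j)%N%:Z) ((i * j)%N%:Z - ((n - k) * (i + j - n))%N%:Z)).

Definition Un (n : nat) : arr n :=
  mk_arr n (fun i j k =>
    ent (Mn n) i j k - (if [&& i == 2%N, j == 2%N & k == 2%N] then 1 else 0)).

Definition covers (n : nat) (C D : arr n) : Prop :=
  [/\ is_csh C, is_csh D, preceq C D, C <> D &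
      forall E : arr n, is_csh E -> preceq C E -> preceq E D -> E = C \/ E = D].

Definition is_lub2 (n : nat) (A B X : arr n) : Prop :=
  [/\ is_csh X, preceq A X, preceq B X &
      forall Y : arr n, is_csh Y -> preceq A Y -> preceq B Y -> preceq X Y].

Definition join_irreducible (n : nat) (X : arr n) : Prop :=
  [/\ is_csh X,
      exists Y : arr n, is_csh Y /\ ~ preceq X Y &
      forall A B : arr n, is_csh A -> is_csh B -> is_lub2 A B X -> A = X \/ B = X].

Definition Xiinv (n : nat) (C : arr n) (i j k : nat) : int :=
  ent C i j k - ent C i.-1 j k - ent C i j.-1 k - ent C i j k.-1
  + ent C i.-1 j.-1 k + ent C i.-1 j k.-1 + ent C i j.-1 k.-1
  - ent C i.-1 j.-1 k.-1.

(* Latin squares of order n: L (i-1, j-1) = k-1 encodes L_{i,j} = k with i,j,k in [n]. *)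
Definition latin (n : nat) := {ffun 'I_n * 'I_n -> 'I_n}.

Definition is_latin (n : nat) (L : latin n) : Prop :=
  (forall (i k : 'I_n), #|[set j : 'I_n | L (i, j) == k]| = 1%N) /\
  (forall (j k : 'I_n), #|[set i : 'I_n | L (i, j) == k]| = 1%N).

(* H(L) with 0-based ordinal indices: H(L)_{a+1,b+1,c+1} = Hent L a b c. *)
Definition Hent (n : nat) (L : latin n) (a b c : 'I_n) : int :=
  if L (a, b) == c then 1 else 0.

(* Xi(H(L)) as an array on [0,n]^3: entry (i,j,k) = sum over 1-based a<=i, b<=j, c<=k,
   i.e. over 0-based ordinals a < i, b < j, c < k. *)
Definition XiH (n : nat) (L : latin n) : arr n :=
  mk_arr n (fun i j k =>
    \sum_(a : 'I_n | (a < i)%N) \sum_(b : 'I_n | (b < j)%N)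
      \sum_(c : 'I_n | (c < k)%N) Hent L a b c).

Definition upper_in (T : Type) (le : T -> T -> Prop) (S A : T -> Prop) : T -> Prop :=
  fun s => S s /\ forall a, A a -> le a s.
Definition lower_in (T : Type) (le : T -> T -> Prop) (S A : T -> Prop) : T -> Prop :=
  fun s => S s /\ forall a, A a -> le s a.
Definition is_cut (T : Type) (le : T -> T -> Prop) (S A : T -> Prop) : Prop :=
  (forall a, A a -> S a) /\
  (forall s, A s <-> lower_in le S (upper_in le S A) s).

(* (P, le) is the Dedekind–MacNeille completion of its subposet S: there is an
   order isomorphism phi from P onto the lattice of cuts of S (ordered by
   inclusion) sending each s in S to its principal cut {t in S | t <= s}. *)
Definition is_DM_completion (T : Type) (P : T -> Prop) (le : T -> T -> Prop)
    (S : T -> Prop) : Prop :=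
  exists phi : T -> T -> Prop,
    [/\ forall x, P x -> is_cut le S (phi x),
        forall x y, P x -> P y -> (le x y <-> forall s, phi x s -> phi y s),
        forall A, is_cut le S A -> exists x, P x /\ forall s, phi x s <-> A s &
        forall s, S s -> forall t, phi s t <-> (S t /\ le t s)].

From mathcomp Require Import all_boot all_order all_algebra.
From mathcomp Require Import zify ring.
From Stdlib Require Import Classical_Prop.
Set Implicit Arguments.
Unset Strict Implicit.
Unset Printing Implicit Defensive.
Import Order.TTheory GRing.Theory Num.Theory.
Local Open Scope ring_scope.

(* Every corner-sum hypermatrix lies entrywise below M_n: along each line it
   starts at 0, ends at ij, and its steps lie in [max(0, i+j-n), min(i,j)].
   On the line through (2,2,.) the entries of M_n are 0, 2, 4, 4, ..., and
   lowering the 4 at k = 2 to 3 keeps all steps admissible; so U_n lies in C_n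
   and anything between M_n and U_n is one of the two. Inclusion-exclusion gives
   Xi^-1(Xi(H(L))) = H(L) >= 0, whereas Xi^-1(U_n)_{2,2,2} = -1. Finally, in a
   Dedekind-MacNeille completion an element x whose only other lower bound is m
   lies in the subposet: for s in the cut of x but not in that of m, the
   principal cut of s is the cut of some element below x other than m, hence of
   x, and so x = s. *)

Section PrefixSums.
Variable n : nat.

Definition prefix1 (f : 'I_n -> int) (k : nat) : int := \sum_(c : 'I_n | (c < k)%N) f c.

Definition prefix2 (g : 'I_n -> 'I_n -> int) (j k : nat) : int :=
  \sum_(b : 'I_n | (b < j)%N) prefix1 (g b) k.

(* [prefix3 F] is Xi(F) for an array F indexed from 0 (see [XiH_prefix3]). *)
Definition prefix3 (F : 'I_n -> 'I_n -> 'I_n -> int) (i j k : nat) : int :=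
  \sum_(a : 'I_n | (a < i)%N) prefix2 (F a) j k.

Lemma sum_ltS (f : 'I_n -> int) k (hk : (k < n)%N) :
  \sum_(c : 'I_n | (c < k.+1)%N) f c = \sum_(c : 'I_n | (c < k)%N) f c + f (Ordinal hk).
Proof.
rewrite (bigD1 (Ordinal hk)) //= addrC; congr (_ + _).
by apply: eq_bigl => c; rewrite -val_eqE /= ltnS; lia.
Qed.

Lemma prefix1S f k (hk : (k < n)%N) : prefix1 f k.+1 = prefix1 f k + f (Ordinal hk).
Proof. exact: sum_ltS. Qed.

Lemma prefix2S g j k (hj : (j < n)%N) :
  prefix2 g j.+1 k = prefix2 g j k + prefix1 (g (Ordinal hj)) k.
Proof. exact: sum_ltS. Qed.

Lemma prefix3S F i j k (hi : (i < n)%N) :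
  prefix3 F i.+1 j k = prefix3 F i j k + prefix2 (F (Ordinal hi)) j k.
Proof. exact: sum_ltS. Qed.

Lemma prefix10 f : prefix1 f 0 = 0.
Proof. exact: big_pred0. Qed.

Lemma prefix1n f : prefix1 f n = \sum_c f c.
Proof. by apply: eq_bigl => c; rewrite ltn_ord. Qed.

Lemma prefix1_const (x : int) k : (k <= n)%N -> prefix1 (fun=> x) k = x * k%:Z.
Proof.
elim: k => [|k IH] hk; first by rewrite prefix10 mulr0.
by rewrite (prefix1S _ hk) IH ?(ltnW hk) // -addn1 PoszD mulrDr mulr1.
Qed.

Lemma prefix1_le_sum f k : (forall c, 0 <= f c) -> prefix1 f k <= \sum_c f c.
Proof.
move=> f_ge0; rewrite [leRHS](bigID (fun c : 'I_n => (c < k)%N)) /=.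
by rewrite lerDl sumr_ge0.
Qed.

Lemma prefix1_compl f k :
  \sum_c f c = prefix1 f k + \sum_(c : 'I_n | ~~ (c < k)%N) f c.
Proof. exact: bigID. Qed.

End PrefixSums.

Section DoublyStochastic.
Variable n : nat.

Definition doubly_stochastic (P : 'I_n -> 'I_n -> int) : Prop :=
  [/\ forall a b, 0 <= P a b, forall a, \sum_b P a b = 1 & forall b, \sum_a P a b = 1].

Lemma sum_ge_le_subn f k : (k <= n)%N -> (forall c, f c <= 1) ->
  \sum_(c : 'I_n | ~~ (c < k)%N) f c <= (n - k)%N%:Z.
Proof.
move=> hk f_le1.
have count_ge : \sum_(c : 'I_n | ~~ (c < k)%N) (1 : int) = (n - k)%N%:Z.
  have := prefix1_compl (fun _ : 'I_n => 1 : int) k.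
  rewrite -prefix1n !prefix1_const // !mul1r => total.
  by apply: (@addrI _ k%:Z); rewrite -total -PoszD subnKC.
by rewrite -count_ge; apply: ler_sum.
Qed.

Lemma prefix2_in_bounds P i j : doubly_stochastic P -> (i <= n)%N -> (j <= n)%N ->
  in_bounds n i j (prefix2 P i j).
Proof.
(* The column sums over the first i rows are at most 1 and add up to i; the
   n - j columns b >= j therefore carry at most n - j of that total. *)
move=> [P_ge0 row1 col1] hi hj.
pose colpart b := prefix1 (P^~ b) i.
have colpart_le1 b : colpart b <= 1 by rewrite -(col1 b) prefix1_le_sum.
have swap : prefix2 P i j = prefix1 colpart j.
  by rewrite /prefix2 /prefix1 exchange_big.
have total : \sum_b colpart b = i%:Z.
  rewrite /colpart /prefix1 exchange_big /= -[RHS]mul1r -(prefix1_const 1 hi).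
  by apply: eq_bigr => a _; rewrite row1.
have ge0 : 0 <= prefix2 P i j by apply: sumr_ge0 => a _; apply: sumr_ge0.
have le_i : prefix2 P i j <= i%:Z.
  rewrite -total swap prefix1_le_sum // => b; exact: sumr_ge0.
have le_j : prefix2 P i j <= j%:Z.
  by rewrite swap -[leRHS]mul1r -(prefix1_const 1 hj); apply: ler_sum.
have ge_ij : i%:Z - (n - j)%N%:Z <= prefix2 P i j.
  rewrite swap -total (prefix1_compl _ j) lerBlDr lerD2l.
  exact: sum_ge_le_subn.
split; lia.
Qed.
End DoublyStochastic.

Lemma ent_mk_arr n f i j k : (i <= n)%N -> (j <= n)%N -> (k <= n)%N ->
  ent (mk_arr n f) i j k = f i j k.
Proof. by move=> hi hj hk; rewrite /ent hi hj hk /mk_arr ffunE /= !inordK. Qed.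

Lemma ent_ord n (C : arr n) (a b c : 'I_n.+1) : ent C a b c = C (a, b, c).
Proof. by rewrite /ent !leq_ord /= !inord_val. Qed.

Section CornerSumArrays.
Variables (n : nat) (f : nat -> nat -> nat -> int).

Lemma is_csh_mk_arr :
  (forall i j, (i <= n)%N -> (j <= n)%N ->
     [/\ f i j 0 = 0, f i 0 j = 0 & f 0 i j = 0]) ->
  (forall i j, (i <= n)%N -> (j <= n)%N ->
     [/\ f i j n = (i * j)%N%:Z, f i n j = (i * j)%N%:Z & f n i j = (i * j)%N%:Z]) ->
  (forall i j k, (i <= n)%N -> (j <= n)%N -> (0 < k)%N -> (k <= n)%N ->
     [/\ in_bounds n i j (f i j k - f i j k.-1),
         in_bounds n i j (f i k j - f i k.-1 j) &
         in_bounds n i j (f k i j - f k.-1 i j)]) ->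
  is_csh (mk_arr n f).
Proof.
move=> f0 fn fstep i j hi hj; have hk1 k : (k <= n)%N -> (k.-1 <= n)%N.
  by move=> hk; rewrite (leq_trans (leq_pred k)).
split; first by rewrite !ent_mk_arr //; exact: f0.
  by rewrite !ent_mk_arr //; exact: fn.
by move=> k k0 kn; rewrite !ent_mk_arr ?hk1 //; exact: fstep.
Qed.

Hypotheses (f_swap23 : forall i j k, (i <= n)%N -> (j <= n)%N -> (k <= n)%N -> f i k j = f i j k)
           (f_rot : forall i j k, (i <= n)%N -> (j <= n)%N -> (k <= n)%N -> f k i j = f i j k).

Lemma is_csh_mk_arr_sym :
  (forall i j, (i <= n)%N -> (j <= n)%N -> f i j 0 = 0) ->
  (forall i j, (i <= n)%N -> (j <= n)%N -> f i j n = (i * j)%N%:Z) ->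
  (forall i j k, (i <= n)%N -> (j <= n)%N -> (0 < k)%N -> (k <= n)%N ->
     in_bounds n i j (f i j k - f i j k.-1)) ->
  is_csh (mk_arr n f).
Proof.
move=> f0 fn fstep; apply: is_csh_mk_arr => [i j hi hj|i j hi hj|i j k hi hj k0 kn].
- by rewrite (@f_swap23 i j 0) // (@f_rot i j 0) // f0.
- by rewrite (@f_swap23 i j n) // (@f_rot i j n) // fn.
have kn1 : (k.-1 <= n)%N by rewrite (leq_trans (leq_pred k)).
rewrite (@f_swap23 i j k) // (@f_swap23 i j k.-1) // (@f_rot i j k) // (@f_rot i j k.-1) //.
by split; apply: fstep.
Qed.
End CornerSumArrays.

Section Xi.
Variable n : nat.
Implicit Type F : 'I_n -> 'I_n -> 'I_n -> int.

Lemma prefix3_swap23 F i j k : prefix3 (fun a b c => F a c b) i j k = prefix3 F i k j.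
Proof. by apply: eq_bigr => a _; rewrite /prefix2 /prefix1 exchange_big. Qed.

Lemma prefix3_rot F i j k : prefix3 (fun a b c => F c a b) i j k = prefix3 F k i j.
Proof.
rewrite /prefix3 /prefix2 /prefix1.
under eq_bigr => a _ do rewrite exchange_big /=.
by rewrite exchange_big.
Qed.

Lemma Xiinv_prefix3 F i j k (hi : (i < n)%N) (hj : (j < n)%N) (hk : (k < n)%N) :
  Xiinv (mk_arr n (prefix3 F)) i.+1 j.+1 k.+1 = F (Ordinal hi) (Ordinal hj) (Ordinal hk).
Proof.
rewrite /Xiinv !ent_mk_arr ?(ltnW hi) ?(ltnW hj) ?(ltnW hk) //= !(prefix3S _ _ _ hi).
by rewrite !(prefix2S _ _ hj) !(prefix1S _ hk); ring.
Qed.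

Definition line_stochastic F : Prop :=
  [/\ forall a b c, 0 <= F a b c,
      forall a b, \sum_c F a b c = 1,
      forall a c, \sum_b F a b c = 1 &
      forall b c, \sum_a F a b c = 1].

Lemma line_stochastic_swap23 F : line_stochastic F -> line_stochastic (fun a b c => F a c b).
Proof. by case. Qed.

Lemma line_stochastic_rot F : line_stochastic F -> line_stochastic (fun a b c => F c a b).
Proof. by case. Qed.

Lemma prefix3_step F i j k (hk : (k < n)%N) :
  prefix3 F i j k.+1 - prefix3 F i j k = prefix2 (fun a b => F a b (Ordinal hk)) i j.
Proof.
rewrite /prefix3 /prefix2 -sumrB; apply: eq_bigr => a _.
by rewrite -sumrB; apply: eq_bigr => b _; rewrite prefix1S addrC addKr.
Qed.

Lemma prefix3_0 F i j : prefix3 F i j 0 = 0.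
Proof. by apply: big1 => a _; apply: big1 => b _; exact: prefix10. Qed.

Lemma line_stochastic_prefix3_full F i j : line_stochastic F -> (i <= n)%N -> (j <= n)%N ->
  prefix3 F i j n = (i * j)%N%:Z.
Proof.
case=> _ sum_c _ _ hi hj.
have row a : prefix2 (F a) j n = j%:Z.
  rewrite -[RHS]mul1r -(prefix1_const 1 hj).
  by apply: eq_bigr => b _; rewrite prefix1n sum_c.
rewrite /prefix3 (eq_bigr _ (fun a _ => row a)) -/(prefix1 (fun=> j%:Z) i).
by rewrite prefix1_const // PoszM mulrC.
Qed.

Lemma line_stochastic_prefix3_step F i j k : line_stochastic F ->
  (i <= n)%N -> (j <= n)%N -> (0 < k)%N -> (k <= n)%N ->
  in_bounds n i j (prefix3 F i j k - prefix3 F i j k.-1).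
Proof.
case=> F_ge0 _ sum_b sum_a hi hj; case: k => // k _ hk.
rewrite prefix3_step; apply: prefix2_in_bounds hi hj.
by split=> [a b|a|b]; [exact: F_ge0 | exact: sum_b | exact: sum_a].
Qed.

Lemma line_stochastic_csh F : line_stochastic F -> is_csh (mk_arr n (prefix3 F)).
Proof.
move=> hF; have hF23 := line_stochastic_swap23 hF; have hFrot := line_stochastic_rot hF.
apply: is_csh_mk_arr => [i j hi hj|i j hi hj|i j k hi hj k0 kn].
- by rewrite -(prefix3_swap23 F i j 0) -(prefix3_rot F i j 0) !prefix3_0.
- by rewrite -(prefix3_swap23 F i j n) -(prefix3_rot F i j n) !line_stochastic_prefix3_full.
rewrite -(prefix3_swap23 F i j k) -(prefix3_swap23 F i j k.-1).
rewrite -(prefix3_rot F i j k) -(prefix3_rot F i j k.-1).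
by split; apply: line_stochastic_prefix3_step.
Qed.
End Xi.

Lemma XiH_prefix3 n (L : latin n) : XiH L = mk_arr n (prefix3 (Hent L)).
Proof. by []. Qed.

Lemma latin_line_stochastic n (L : latin n) : is_latin L -> line_stochastic (Hent L).
Proof.
case=> row col; have count1 (p : pred 'I_n) : #|p| = 1%N -> \sum_x (if p x then 1 else 0 : int) = 1.
  by move=> hp; rewrite -big_mkcond /= sumr_const hp.
split=> [a b c|a b|a c|b c]; rewrite /Hent.
- by case: ifP.
- rewrite (bigD1 (L (a, b))) //= eqxx big1 ?addr0 // => c.
  by rewrite eq_sym => /negbTE->.
- by apply: count1; rewrite -(row a c) cardsE.
- by apply: count1; rewrite -(col b c) cardsE.
Qed.

Lemma Xiinv_XiH_ge0 n (L : latin n) : (2 <= n)%N -> 0 <= Xiinv (XiH L) 2 2 2.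
Proof.
move=> hn; rewrite XiH_prefix3 (Xiinv_prefix3 _ hn hn hn) /Hent.
by case: ifP.
Qed.

Definition M_entry (n i j k : nat) : int :=
  Order.min ((k * minn i j)%N%:Z) ((i * j)%N%:Z - ((n - k) * (i + j - n))%N%:Z).

Lemma MnE n : Mn n = mk_arr n (M_entry n).
Proof. by []. Qed.

Section MEntry.
Variables (n i j : nat) (hi : (i <= n)%N) (hj : (j <= n)%N).

(* In this form M_n is visibly invariant under permutations of i, j, k. *)
Lemma M_entry_sym k : (k <= n)%N ->
  M_entry n i j k = Order.min (Order.min (Order.min (i * j)%N%:Z (i * k)%N%:Z) (j * k)%N%:Z)
    ((i * j + i * k + j * k + n * n)%N%:Z - (n * (i + j + k))%N%:Z).
Proof.
move=> hk; rewrite /M_entry.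
case: (leqP i j) => hij; case: (leqP (i + j) n) => hs; nia.
Qed.

Lemma M_entry0 : M_entry n i j 0 = 0.
Proof. rewrite /M_entry; case: (leqP (i + j) n) => hs; nia. Qed.

Lemma M_entry_full : M_entry n i j n = (i * j)%N%:Z.
Proof. rewrite /M_entry subnn mul0n subr0; nia. Qed.

Lemma M_entry_step k : (0 < k)%N -> (k <= n)%N ->
  in_bounds n i j (M_entry n i j k - M_entry n i j k.-1).
Proof.
case: k => // k _ hk; rewrite /in_bounds /M_entry /=.
have -> : (n - k = (n - k.+1).+1)%N by lia.
rewrite !mulSn; nia.
Qed.

End MEntry.

Lemma M_entry_swap23 n i j k : (i <= n)%N -> (j <= n)%N -> (k <= n)%N ->
  M_entry n i k j = M_entry n i j k.
Proof. move=> hi hj hk; rewrite !M_entry_sym //; lia. Qed.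

Lemma M_entry_rot n i j k : (i <= n)%N -> (j <= n)%N -> (k <= n)%N ->
  M_entry n k i j = M_entry n i j k.
Proof. move=> hi hj hk; rewrite !M_entry_sym //; lia. Qed.

Lemma Mn_csh n : is_csh (Mn n).
Proof.
rewrite MnE; apply: is_csh_mk_arr_sym.
- exact: M_entry_swap23.
- exact: M_entry_rot.
- exact: M_entry0.
- exact: M_entry_full.
- by move=> i j k hi hj; exact: M_entry_step.
Qed.

Lemma csh_ent_le_M_entry n (A : arr n) i j k : is_csh A ->
  (i <= n)%N -> (j <= n)%N -> (k <= n)%N -> ent A i j k <= M_entry n i j k.
Proof.
(* Climb from the face k = 0 with steps at most min(i,j), or descend from the
   face k = n with steps at least i + j - n. *)
move=> hA hi hj hk; have [[A0 _ _] [An _ _] A_step] := hA i j hi hj.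
have from_bottom l : (l <= n)%N -> ent A i j l <= (l * minn i j)%N%:Z.
  elim: l => [|l IH] hl; first by rewrite A0.
  have [[_ step_le] _ _] := A_step l.+1 isT hl.
  by move: step_le (IH (ltnW hl)) => /=; rewrite mulSn; lia.
have from_top m : (m <= n)%N -> ent A i j (n - m) <= (i * j)%N%:Z - (m * (i + j - n))%N%:Z.
  elim: m => [|m IH] hm; first by rewrite subn0 An mul0n subr0.
  have [[step_ge _] _ _] := A_step (n - m)%N ltac:(lia) ltac:(lia).
  rewrite (_ : (n - m).-1 = n - m.+1)%N in step_ge; last by lia.
  by move: step_ge (IH (ltnW hm)); rewrite mulSn; lia.
have := from_bottom k hk; have := from_top (n - k)%N (leq_subr k n).
by rewrite subKn // /M_entry; lia.
Qed.

Lemma Mn_min n (A : arr n) : is_csh A -> preceq (Mn n) A.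
Proof.
move=> hA; rewrite /preceq => -[[a b] c]; rewrite -!ent_ord MnE ent_mk_arr ?leq_ord //.
exact: csh_ent_le_M_entry (leq_ord a) (leq_ord b) (leq_ord c).
Qed.

Definition delta222 (i j k : nat) : int :=
  if [&& i == 2%N, j == 2%N & k == 2%N] then 1 else 0.

Lemma UnE n : Un n = mk_arr n (fun i j k => ent (Mn n) i j k - delta222 i j k).
Proof. by []. Qed.

Lemma delta222_swap23 i j k : delta222 i k j = delta222 i j k.
Proof. by rewrite /delta222 (andbC (k == 2%N)). Qed.

Lemma delta222_rot i j k : delta222 k i j = delta222 i j k.
Proof. by rewrite /delta222 andbC andbA. Qed.

Lemma M_entry_small n i j k : (i + j <= n)%N ->
  M_entry n i j k = Order.min (k * minn i j)%N%:Z (i * j)%N%:Z.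
Proof. by move=> h; rewrite /M_entry (_ : i + j - n = 0)%N ?muln0 ?subr0 //; lia. Qed.

Lemma Un_step n i j k : (4 <= n)%N -> (i <= n)%N -> (j <= n)%N -> (0 < k)%N -> (k <= n)%N ->
  in_bounds n i j ((M_entry n i j k - delta222 i j k) - (M_entry n i j k.-1 - delta222 i j k.-1)).
Proof.
move=> hn hi hj k0 kn.
have [/andP[/eqP-> /eqP->] | not22] := boolP ((i == 2%N) && (j == 2%N)).
  rewrite !M_entry_small ?addnn //= /in_bounds /delta222 (_ : 2 + 2 - n = 0)%N; last by lia.
  by case: k k0 kn => [|[|[|[|k]]]] //= _ _; lia.
rewrite /delta222 !andbA (negbTE not22) !subr0; exact: (M_entry_step hi hj k0 kn).
Qed.

Lemma Un_csh n : (4 <= n)%N -> is_csh (Un n).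
Proof.
move=> hn; have hk1 k : (k <= n)%N -> (k.-1 <= n)%N by move/(leq_trans (leq_pred k)).
rewrite UnE; apply: is_csh_mk_arr_sym => [i j k hi hj hk|i j k hi hj hk|i j hi hj|i j hi hj|i j k hi hj k0 kn].
- by rewrite !MnE !ent_mk_arr // M_entry_swap23 // delta222_swap23.
- by rewrite !MnE !ent_mk_arr // M_entry_rot // delta222_rot.
- by rewrite MnE ent_mk_arr // M_entry0 // /delta222 !andbF.
- rewrite MnE ent_mk_arr // M_entry_full // /delta222 (_ : n == 2%N = false) ?andbF ?subr0 //.
  by apply/negbTE; lia.
by rewrite MnE !ent_mk_arr ?hk1 //; exact: Un_step.
Qed.

Lemma Xiinv_Un n : (4 <= n)%N -> Xiinv (Un n) 2 2 2 = -1.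
Proof.
move=> hn; rewrite /Xiinv UnE MnE /= !ent_mk_arr ?(leq_trans _ hn) //.
by rewrite !M_entry_small ?(leq_trans _ hn).
Qed.

Section Preceq.
Variable n : nat.
Implicit Types A B C : arr n.

Lemma preceq_refl A : preceq A A.
Proof. by move=> t. Qed.

Lemma preceq_trans A B C : preceq A B -> preceq B C -> preceq A C.
Proof. by move=> AB BC t; exact: le_trans (BC t) (AB t). Qed.

Lemma preceq_anti A B : preceq A B -> preceq B A -> A = B.
Proof. by move=> AB BA; apply/ffunP => t; apply/le_anti; rewrite AB BA. Qed.
End Preceq.

Section CoverOfMn.
Variables (n : nat) (hn : (4 <= n)%N).

Definition c222 : 'I_n.+1 * 'I_n.+1 * 'I_n.+1 := (inord 2, inord 2, inord 2).

Lemma Un_ffunE t : Un n t = Mn n t - (t == c222)%:R.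
Proof.
case: t => [[a b] c]; rewrite -!ent_ord UnE ent_mk_arr ?leq_ord //; congr (_ - _).
have eq2 (x : 'I_n.+1) : (x == inord 2) = (x == 2%N :> nat).
  by rewrite -val_eqE /= inordK //; lia.
by rewrite /delta222 !xpair_eqE !eq2 andbA; case: ifP.
Qed.

Lemma Un_not_preceq_Mn : ~ preceq (Un n) (Mn n).
Proof. by move/(_ c222); rewrite Un_ffunE eqxx mulr1n; lia. Qed.

Lemma Mn_neq_Un : Mn n <> Un n.
Proof. by move=> MU; apply: Un_not_preceq_Mn; rewrite -MU; exact: preceq_refl. Qed.

Lemma preceq_Un_cases (E : arr n) : is_csh E -> preceq E (Un n) -> E = Mn n \/ E = Un n.
Proof.
move=> hE E_Un; have Mn_E := Mn_min hE.
have off222 t : t != c222 -> E t = Mn n t.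
  by move=> ht; apply/le_anti; rewrite Mn_E; move: (E_Un t); rewrite Un_ffunE (negbTE ht) subr0.
have [E222|/eqP E222] := eqVneq (E c222) (Mn n c222).
  by left; apply/ffunP => t; have [->|/off222] := eqVneq t c222.
right; apply/ffunP => t; have [->|ht] := eqVneq t c222; last first.
  by rewrite off222 // Un_ffunE (negbTE ht) subr0.
have := Mn_E c222; have := E_Un c222; rewrite Un_ffunE eqxx mulr1n.
by move: E222; set x := E c222; set y := Mn n c222; lia.
Qed.

Lemma Mn_covered_by_Un : covers (Mn n) (Un n).
Proof.
split; [exact: Mn_csh | exact: Un_csh | exact: Mn_min (Un_csh hn) | exact: Mn_neq_Un |].
by move=> E hE _; exact: preceq_Un_cases.
Qed.

Lemma Un_join_irreducible : join_irreducible (Un n).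
Proof.
split; [exact: Un_csh | by exists (Mn n); split; [exact: Mn_csh | exact: Un_not_preceq_Mn] |].
move=> A B hA hB [_ A_U B_U lub].
have [A_M|] := preceq_Un_cases hA A_U; last by left.
have [B_M|] := preceq_Un_cases hB B_U; last by right.
exfalso; apply: Un_not_preceq_Mn; apply: lub; rewrite ?A_M ?B_M //; exact: Mn_csh.
Qed.

Lemma Un_neq_XiH (L : latin n) : Un n <> XiH L.
Proof.
move=> U_L; have := Xiinv_XiH_ge0 L (ltnW (ltnW hn)).
by rewrite -U_L Xiinv_Un.
Qed.
End CoverOfMn.

Section DedekindMacNeille.
Variables (T : Type) (P : T -> Prop) (le : T -> T -> Prop) (S : T -> Prop).
Hypotheses (le_refl : forall x, le x x)
           (le_trans : forall x y z, le x y -> le y z -> le x z)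
           (le_anti : forall x y, le x y -> le y x -> x = y)
           (S_P : forall s, S s -> P s).

Lemma DM_completion_cover_mem m x : is_DM_completion P le S -> P m -> P x ->
  ~ le x m -> (forall y, P y -> le y x -> y = m \/ y = x) -> S x.
Proof.
move=> [phi [phi_cut phi_mono phi_onto phi_S]] Pm Px x_m below_x.
have [s [phi_x_s phi_m_s]] : exists s, phi x s /\ ~ phi m s.
  apply: NNPP => no_s; apply/x_m/(phi_mono _ _ Px Pm) => s phi_x_s.
  by apply: NNPP => phi_m_s; apply: no_s; exists s.
have [cut_sub cut_eq] := phi_cut _ Px; have Ss := cut_sub _ phi_x_s.
pose down_s t := S t /\ le t s.
have down_cut : is_cut le S down_s.
  rewrite /is_cut /lower_in /upper_in /down_s.
  split=> [t []//|t]; split=> [[St t_s]|[St up]].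
    by split=> // u [_ u_up]; exact: u_up _ (conj St t_s).
  by split=> //; apply: up; split=> // u [].
have [y [Py phi_y]] := phi_onto _ down_cut.
have y_x : le y x.
  apply/(phi_mono _ _ Py Px) => t /phi_y [St t_s]; apply/cut_eq.
  by split=> // u [_ u_up]; apply: le_trans t_s (u_up _ phi_x_s).
have phi_x_down t : phi x t <-> down_s t.
  case: (below_x _ Py y_x) => y_eq; last by rewrite -y_eq.
  by exfalso; apply: phi_m_s; rewrite -y_eq; apply/phi_y; exact: (conj Ss (le_refl s)).
suff -> : x = s by [].
apply: le_anti; [apply/(phi_mono _ _ Px (S_P Ss)) | apply/(phi_mono _ _ (S_P Ss) Px)] => t.
  by move/phi_x_down/(phi_S _ Ss).
by move/(phi_S _ Ss)/phi_x_down.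
Qed.
End DedekindMacNeille.

Theorem mainTheorem16 (n : nat) (hn : (4 <= n)%N) :
  [/\ [/\ is_csh (Un n),
          covers (Mn n) (Un n) &
          join_irreducible (Un n)],
      Xiinv (Un n) 2 2 2 = -1,
      forall L : latin n, is_latin L -> Un n <> XiH L &
      ~ is_DM_completion (@is_csh n) (@preceq n)
          (fun C : arr n => exists L : latin n, is_latin L /\ C = XiH L)].
Proof.
split; [split | exact: Xiinv_Un | by move=> L _; exact: Un_neq_XiH |].
- exact: Un_csh.
- exact: Mn_covered_by_Un.
- exact: Un_join_irreducible.
move=> DM; have [L [_ U_L]] : exists L : latin n, is_latin L /\ Un n = XiH L.
  apply: (DM_completion_cover_mem (@preceq_refl n) (@preceq_trans n) (@preceq_anti n) _ DM
    (@Mn_csh n) (Un_csh hn) (Un_not_preceq_Mn hn)).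
  - by move=> _ [L [hL ->]]; exact/line_stochastic_csh/latin_line_stochastic.
  - by move=> E hE E_U; exact: preceq_Un_cases.
exact: Un_neq_XiH U_L.
Qed.
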